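(* Let $A$ be a finitely generated abelian group with a finite generating subset $S$. There exists a constant $C>0$ such that for every subgroup $H\le A$, $\det(H)\le C(\|H\|_S)^{\mathrm{rank}_{\mathbb{Z}}(H)}$.
   Context: $\|\cdot\|_S$ is word length; for a subgroup $H$, $\|H\|_S=\min\{\max_{h\in X}\|h\|_S: X\text{ a finite generating subset of }H\}$. $\sqrt[A]{H}=\{a\in A:a^m\in H\text{ for some } m\ge1\}$ and $\det(H)=[\sqrt[A]{H}:H]$. $\mathrm{rank}_{\mathbb{Z}}$ is torsion-free rank. *)

(* Abelian groups are zmodType's (written additively). *)
From mathcomp Require Import all_boot all_order all_algebra.
Set Implicit Arguments. Unset Strict Implicit. Unset Printing Implicit Defensive.
Import Order.TTheory GRing.Theory Num.Theory.
Local Open Scope ring_scope.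

Section Defs.
Variable A : zmodType.

Definition is_subgroup (H : A -> Prop) : Prop :=
  H 0 /\ (forall x y, H x -> H y -> H (x - y)).

Definition in_span (X : seq A) (a : A) : Prop :=
  exists c : seq int, size c = size X /\
    a = \sum_(i < size X) (X`_i *~ c`_i).

Definition generates (X : seq A) (H : A -> Prop) : Prop :=
  (forall x, x \in X -> H x) /\ (forall h, H h -> in_span X h).

Definition wordlen_le (S : seq A) (a : A) (n : nat) : Prop :=
  exists w : seq A, (size w <= n)%N /\
    (forall y, y \in w -> (y \in S) \/ (- y \in S)) /\
    a = \sum_(y <- w) y.

Definition subgroup_norm_le (S : seq A) (H : A -> Prop) (m : nat) : Prop :=
  exists X : seq A, generates X H /\ forall x, x \in X -> wordlen_le S x m.

Definition subgroup_norm_is (S : seq A) (H : A -> Prop) (n : nat) : Prop :=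
  subgroup_norm_le S H n /\ forall m, subgroup_norm_le S H m -> (n <= m)%N.

Definition isolator (H : A -> Prop) : A -> Prop :=
  fun a => exists m : nat, (0 < m)%N /\ H (a *+ m).

(* [K : H] = d : a complete system of d distinct coset representatives *)
Definition index_is (K H : A -> Prop) (d : nat) : Prop :=
  exists c : seq A, size c = d /\
    (forall i, (i < d)%N -> K c`_i) /\
    (forall a, K a -> exists i, (i < d)%N /\ H (a - c`_i)) /\
    (forall i j, (i < d)%N -> (j < d)%N -> H (c`_i - c`_j) -> i = j).

Definition det_is (H : A -> Prop) (d : nat) : Prop := index_is (isolator H) H d.

Definition Zindep (s : seq A) : Prop :=
  forall c : seq int, size c = size s ->
    \sum_(i < size s) (s`_i *~ c`_i) = 0 -> forall i, (i < size s)%N -> c`_i = 0.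

Definition rankZ_is (H : A -> Prop) (r : nat) : Prop :=
  (exists s : seq A, size s = r /\ (forall x, x \in s -> H x) /\ Zindep s) /\
  (forall s : seq A, (forall x, x \in s -> H x) -> Zindep s -> (size s <= r)%N).

End Defs.

(* Pick a maximal Z-free subfamily E of S and M > 0 with M A <= <E>.  The
   coordinates of M a in E form an additive map [coord : A -> Z^E] whose kernel
   is the torsion subgroup T, which is finite.  If H is generated by elements of
   S-length at most n, a maximal free subfamily Y of these generators spans a
   subgroup with the same isolator as H.  If c bounds the coordinates of the
   letters of S, a nonsingular maximal minor B of the coordinate matrix of Y
   has entries at most n c, so |det B| <= |E|! (n c)^|Y|,
   and reducing the coordinates of the isolator of <Y> modulo the row lattice
   of B shows [isolator <Y> : <Y>] <= |det B| |T|; as <Y> <= H this bounds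
   det(H) by |E|! c^|E| |T| n^rank(H). *)

From HB Require Import structures.
From mathcomp Require Import all_boot all_order all_algebra perm zify.
From Stdlib Require Import Classical.
Set Implicit Arguments. Unset Strict Implicit. Unset Printing Implicit Defensive.
Import Order.TTheory GRing.Theory Num.Theory.
Local Open Scope ring_scope.

Lemma ex_min_nat (P : nat -> Prop) :
  (exists n, P n) -> exists n, P n /\ forall m, P m -> (n <= m)%N.
Proof.
case=> n; elim/ltn_ind: n => n IHn Pn.
case: (classic (exists2 m, (m < n)%N & P m)) => [[m ltmn Pm]|no_less].
  exact: IHn ltmn Pm.
exists n; split=> // m Pm; rewrite leqNgt; apply/negP => ltmn.
by apply: no_less; exists m.
Qed.

Lemma ex_max_nat (P : nat -> Prop) (b : nat) :
  (exists n, P n) -> (forall n, P n -> (n <= b)%N) ->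
  exists n, P n /\ forall m, P m -> (m <= n)%N.
Proof.
move=> [n Pn] le_b.
have [|k [Pk k_min]] := @ex_min_nat (fun k => P (b - k)%N).
  by exists (b - n)%N; rewrite subKn ?le_b.
exists (b - k)%N; split=> // m Pm.
have le_mb := le_b m Pm.
by have := k_min (b - m)%N; rewrite subKn // => /(_ Pm); lia.
Qed.

Lemma finite_choice (T U : eqType) (P : T -> U -> Prop) (s : seq T) :
  exists l : seq U, (size l <= size s)%N /\
    (forall u, u \in l -> exists2 t, t \in s & P t u) /\
    (forall t, t \in s -> (exists u, P t u) -> exists2 u, u \in l & P t u).
Proof.
elim: s => [|t s [l [size_l [l_sound l_complete]]]].
  by exists [::]; split=> //; split=> ? //.
case: (classic (exists u, P t u)) => [[u Ptu]|noPt].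
  exists (u :: l); split; first by rewrite ltnS.
  split=> [v|t'].
    rewrite inE => /predU1P[->|/l_sound[t' t's Pt'v]].
      by exists t; rewrite ?mem_head.
    by exists t'; rewrite // inE t's orbT.
  rewrite inE => /predU1P[-> _|/l_complete t's /t's[v vl Pv]].
    by exists u; rewrite ?mem_head.
  by exists v; rewrite // inE vl orbT.
exists l; split; first exact: leqW.
split=> [v /l_sound[t' t's Pt'v]|t']; first by exists t'; rewrite // inE t's orbT.
by rewrite inE => /predU1P[-> /noPt|/l_complete].
Qed.

Section Subgroups.
Variable A : zmodType.
Implicit Types (H K : A -> Prop) (X Y R c : seq A) (a b x y : A).

Lemma subgroupN H x : is_subgroup H -> H x -> H (- x).
Proof. by case=> H0 HB Hx; rewrite -sub0r; apply: HB. Qed.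

Lemma subgroupD H x y : is_subgroup H -> H x -> H y -> H (x + y).
Proof. by move=> hH Hx Hy; rewrite -[y]opprK; apply: hH.2 => //; apply: subgroupN. Qed.

Lemma subgroupMn H x n : is_subgroup H -> H x -> H (x *+ n).
Proof.
move=> hH Hx; elim: n => [|n IHn]; first by rewrite mulr0n; apply: hH.1.
by rewrite mulrS; apply: subgroupD.
Qed.

Lemma subgroupMz H x z : is_subgroup H -> H x -> H (x *~ z).
Proof.
move=> hH Hx; case: z => n; first exact: subgroupMn.
by rewrite NegzE mulrNz; apply: subgroupN => //; apply: subgroupMn.
Qed.

Lemma subgroup_sum H I (r : seq I) (P : pred I) (F : I -> A) :
  is_subgroup H -> (forall i, P i -> H (F i)) -> H (\sum_(i <- r | P i) F i).
Proof.
move=> hH HF; elim/big_rec: _ => [|i x Pi Hx]; first exact: hH.1.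
by apply: subgroupD => //; apply: HF.
Qed.

Lemma subgroup_subC H x y : is_subgroup H -> H (x - y) -> H (y - x).
Proof. by move=> hH Hxy; rewrite -opprB; apply: subgroupN. Qed.

Lemma subgroup_sub_trans H x y z :
  is_subgroup H -> H (x - y) -> H (y - z) -> H (x - z).
Proof. by move=> hH Hxy Hyz; rewrite -(subrK y x) -addrA; apply: subgroupD. Qed.

Lemma trivial_subgroup : is_subgroup (fun a : A => a = 0).
Proof. by split=> // x y -> ->; rewrite subrr. Qed.

Definition zspan X a :=
  exists c : 'I_(size X) -> int, a = \sum_(i < size X) X`_i *~ c i.

Lemma zspan_subgroup X : is_subgroup (zspan X).
Proof.
split; first by exists (fun _ => 0); rewrite big1 // => i _; rewrite mulr0z.
move=> _ _ [c ->] [c' ->]; exists (fun i => c i - c' i).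
by rewrite -sumrB; apply: eq_bigr => i _; rewrite mulrzBr.
Qed.

Lemma mem_zspan X x : x \in X -> zspan X x.
Proof.
move=> xX; pose i0 := Ordinal (etrans (index_mem x X) xX).
exists (fun i => (i == i0)%:Z); rewrite (bigD1 i0) //= eqxx nth_index // big1 ?addr0 //.
by move=> i /negbTE ->.
Qed.

Lemma zspan_min H X a :
  is_subgroup H -> (forall x, x \in X -> H x) -> zspan X a -> H a.
Proof.
move=> hH HX [c ->]; apply: subgroup_sum => // i _.
by apply: subgroupMz => //; apply/HX/mem_nth.
Qed.

Lemma in_spanE X a : in_span X a <-> zspan X a.
Proof.
split=> [[c [_ ->]]|[c ->]]; first by exists (fun i => c`_i).
exists [seq c i | i <- enum 'I_(size X)]; rewrite size_map size_enum_ord.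
split=> //; apply: eq_bigr => i _.
by rewrite (nth_map i) ?size_enum_ord ?nth_ord_enum.
Qed.

Definition zfree X := forall c : 'I_(size X) -> int,
  \sum_(i < size X) X`_i *~ c i = 0 -> forall i, c i = 0.

Lemma ZindepE X : Zindep X <-> zfree X.
Proof.
split=> [freeX c c0 i|freeX c size_c c0 i lt_i]; last first.
  exact: (freeX (fun j => c`_j) c0 (Ordinal lt_i)).
have cE (j : 'I_(size X)) : [seq c i | i <- enum 'I_(size X)]`_j = c j.
  by rewrite (nth_map j) ?size_enum_ord ?nth_ord_enum.
rewrite -cE; apply: freeX => //; first by rewrite size_map size_enum_ord.
by rewrite -[RHS]c0; apply: eq_bigr => j _; rewrite cE.
Qed.

Lemma zfree_nil : zfree [::].
Proof. by move=> c _ []. Qed.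

Lemma zfreeMn X (c : 'I_(size X) -> int) n : zfree X -> (0 < n)%N ->
  (\sum_(i < size X) X`_i *~ c i) *+ n = 0 -> forall i, c i = 0.
Proof.
move=> freeX n_gt0 cn0 i; have /(_ _ i)/eqP := freeX (fun i => c i * n%:Z).
rewrite mulf_eq0 (gt_eqF (_ : 0 < n%:Z)) ?ltz_nat // orbF => ci0; apply/eqP/ci0.
by rewrite -[RHS]cn0 -sumrMnl; apply: eq_bigr => j _; rewrite mulrzA -pmulrn.
Qed.

Lemma zfree_neq0 X x : zfree X -> x \in X -> x != 0.
Proof.
move=> freeX xX; apply/eqP => x0.
pose i0 := Ordinal (etrans (index_mem x X) xX).
suff : (i0 == i0)%:Z = 0 by rewrite eqxx.
apply: (freeX (fun i => (i == i0)%:Z)).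
rewrite (bigD1 i0) //= nth_index // x0 mul0rz add0r big1 // => i /negbTE ->.
by rewrite mulr0z.
Qed.

Definition torsion a := isolator (fun x => x = 0) a.

Lemma isolator_subgroup H : is_subgroup H -> is_subgroup (isolator H).
Proof.
move=> hH; split; first by exists 1%N; rewrite mulr1n; split=> //; apply: hH.1.
move=> x y [m [m_gt0 Hxm]] [k [k_gt0 Hyk]]; exists (m * k)%N.
rewrite muln_gt0 m_gt0 mulrnBl; split=> //; apply: hH.2.
  by rewrite mulrnA; apply: subgroupMn.
by rewrite mulnC mulrnA; apply: subgroupMn.
Qed.

Lemma sub_isolator H a : H a -> isolator H a.
Proof. by exists 1%N; rewrite mulr1n. Qed.

Lemma isolatorS H K a : (forall b, H b -> K b) -> isolator H a -> isolator K a.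
Proof. by move=> sHK [m [m_gt0 Ham]]; exists m; split; last apply: sHK. Qed.

Lemma isolator_idem H a : isolator (isolator H) a -> isolator H a.
Proof.
move=> [m [m_gt0 [k [k_gt0 Hamk]]]]; exists (m * k)%N.
by rewrite muln_gt0 m_gt0 mulrnA.
Qed.

Lemma isolator_uniform H X : is_subgroup H ->
  (forall x, x \in X -> isolator H x) ->
  exists2 m, (0 < m)%N & forall x, x \in X -> H (x *+ m).
Proof.
move=> hH; elim: X => [|x X IHX] isoX; first by exists 1%N.
have [|m m_gt0 HXm] := IHX; first by move=> y yX; apply: isoX; rewrite inE yX orbT.
have [k [k_gt0 Hxk]] := isoX x (mem_head x X).
exists (k * m)%N; first by rewrite muln_gt0 k_gt0.
move=> y; rewrite inE => /predU1P[->|/HXm Hym].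
  by rewrite mulrnA; apply: subgroupMn.
by rewrite mulnC mulrnA; apply: subgroupMn.
Qed.

Lemma isolatorMz H x z : is_subgroup H -> z != 0 -> H (x *~ z) -> isolator H x.
Proof.
move=> hH; case: z => n n_neq0 Hxz.
  by exists n; rewrite lt0n pmulrn; split=> //; apply: contraNneq n_neq0 => ->.
by exists n.+1; split=> //; move/subgroupN: Hxz; rewrite NegzE mulrNz opprK; apply.
Qed.

Lemma isolator_of_not_zfree_cons Y x :
  zfree Y -> ~ zfree (x :: Y) -> isolator (zspan Y) x.
Proof.
move=> freeY dep; apply: NNPP => not_iso; apply: dep => c c0.
have c00 : c ord0 = 0.
  apply: NNPP => /eqP c0_neq0; apply/not_iso/(isolatorMz (zspan_subgroup Y) c0_neq0).
  move: c0; rewrite big_ord_recl /= => /eqP; rewrite addr_eq0 => /eqP ->.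
  by apply: subgroupN; [apply: zspan_subgroup|exists (c \o lift ord0)].
have cY0 : forall i, c (lift ord0 i) = 0.
  apply: freeY; move: c0; rewrite big_ord_recl /= c00 mulr0z add0r => c0.
  by rewrite -[RHS]c0; apply: eq_bigr.
by move=> i; case: (unliftP ord0 i) => [j ->|->].
Qed.

Lemma zspanS X X' a : {subset X <= X'} -> zspan X a -> zspan X' a.
Proof.
by move=> sXX'; apply: zspan_min => [|x /sXX']; [apply: zspan_subgroup|apply: mem_zspan].
Qed.

Lemma zfree_subseq_isolator X : exists Y, {subset Y <= X} /\ zfree Y /\
  forall x, x \in X -> isolator (zspan Y) x.
Proof.
elim: X => [|x X [Y [sYX [freeY isoX]]]].
  by exists [::]; split=> //; split=> //; apply: zfree_nil.
have sXx : {subset X <= x :: X} by move=> y yX; rewrite inE yX orbT.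
case: (classic (zfree (x :: Y))) => [freexY|]; last first.
  move=> /(isolator_of_not_zfree_cons freeY) isox; exists Y; split=> [y /sYX/sXx //|].
  by split=> // y; rewrite inE => /predU1P[->|/isoX].
exists (x :: Y); split=> [y|].
  by rewrite !inE => /predU1P[->|/sYX ->]; rewrite ?eqxx ?orbT.
split=> // y; rewrite inE => /predU1P[->|/isoX]; last first.
  by apply: isolatorS => a; apply: zspanS => z zY; rewrite inE zY orbT.
by apply/sub_isolator/mem_zspan/mem_head.
Qed.

Lemma rankZ_isolator H Y : is_subgroup H -> (forall y, y \in Y -> H y) ->
  zfree Y -> rankZ_is H (size Y) -> forall h, H h -> isolator (zspan Y) h.
Proof.
move=> hH HY freeY [_ rank_max] h Hh; apply: NNPP => not_iso.
suff : (size (h :: Y) <= size Y)%N by rewrite ltnn.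
apply: rank_max; last first.
  apply/ZindepE; apply: NNPP => dep; apply: not_iso; exact: isolator_of_not_zfree_cons dep.
by move=> x; rewrite inE => /predU1P[->|/HY].
Qed.

Lemma generates_of_cover H Y R : is_subgroup H -> (forall y, y \in Y -> H y) ->
  (forall h, H h -> exists2 x, x \in R & zspan Y (h - x)) ->
  exists X, generates X H.
Proof.
move=> hH HY coverR.
have [l [_ [l_sound l_complete]]] := finite_choice (fun x h => H h /\ zspan Y (h - x)) R.
exists (Y ++ l); split=> [x|h Hh].
  by rewrite mem_cat => /orP[/HY //|/l_sound[? _ []]].
have [x xR Yhx] := coverR h Hh.
have [h' h'l [_ Yh'x]] := l_complete x xR (ex_intro _ h (conj Hh Yhx)).
have spanY := zspan_subgroup Y.
apply/in_spanE; rewrite -(subrK h' h); apply: subgroupD; first exact: zspan_subgroup.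
  apply: zspanS (subgroup_sub_trans spanY Yhx (subgroup_subC spanY Yh'x)).
  by move=> y yY; rewrite mem_cat yY.
by apply: mem_zspan; rewrite mem_cat h'l orbT.
Qed.

Lemma distinct_coset_reps K H c : is_subgroup H -> exists c',
  [/\ (size c' <= size c)%N, forall x, x \in c' -> K x,
      forall x, x \in c -> K x -> exists2 y, y \in c' & H (x - y)
    & forall i j, (i < size c')%N -> (j < size c')%N -> H (c'`_i - c'`_j) -> i = j].
Proof.
move=> hH; elim: c => [|x c [c' [size_c' Kc' cover_c' uniq_c']]].
  by exists [::]; split=> // [? //|[] //].
case: (classic (K x /\ ~ exists2 y, y \in c' & H (x - y))) => [[Kx new_x]|old_x].
  exists (x :: c'); split=> [||y|].
  - by rewrite ltnS.
  - by move=> y; rewrite inE => /predU1P[->|/Kc'].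
  - rewrite inE => /predU1P[-> _|/cover_c' yc /yc[z zc' Hyz]].
      by exists x; rewrite ?mem_head // subrr; apply: hH.1.
    by exists z; rewrite // inE zc' orbT.
  move=> [|i] [|j] //= lt_i lt_j Hij; last by congr S; apply: uniq_c'.
    by case: new_x; exists c'`_j; rewrite ?mem_nth.
  by case: new_x; exists c'`_i; rewrite ?mem_nth //; apply: subgroup_subC.
exists c'; split=> // [|y]; first exact: leqW.
rewrite inE => /predU1P[-> Kx|/cover_c' //].
by apply: NNPP => new_x; apply: old_x.
Qed.

Lemma index_le_cover K H c :
  is_subgroup H -> is_subgroup K -> (forall a, H a -> K a) ->
  (forall a, K a -> exists2 x, x \in c & H (a - x)) ->
  exists2 d, (d <= size c)%N & index_is K H d.
Proof.
move=> hH hK sHK coverK.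
have [c' [size_c' Kc' cover_c' uniq_c']] := distinct_coset_reps K c hH.
exists (size c') => //; exists c'; split=> //; split=> [i lt_i|]; first exact/Kc'/mem_nth.
split=> // a Ka; have [x xc Hax] := coverK a Ka.
have Kx : K x by rewrite -[x](subKr a); apply: hK.2 => //; apply: sHK.
have [y yc' Hxy] := cover_c' x xc Kx.
exists (index y c'); rewrite index_mem nth_index //.
by split=> //; apply: subgroup_sub_trans Hxy.
Qed.

End Subgroups.

Section WordLength.
Variables (A : zmodType) (S : seq A).
Implicit Types (H : A -> Prop) (X : seq A) (a : A).

Lemma wordlen_leW a n n' : wordlen_le S a n -> (n <= n')%N -> wordlen_le S a n'.
Proof.
by move=> [w [size_w w_letters]] le_nn'; exists w; split=> //; apply: leq_trans le_nn'.
Qed.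

Lemma wordlen_le0 a : wordlen_le S a 0 -> a = 0.
Proof. by move=> [[|y w] [size_w [_ ->]]] //; rewrite big_nil. Qed.

Hypothesis genS : generates S (fun _ => True).

Lemma wordlen_finite a : exists n, wordlen_le S a n.
Proof.
have finite_subgroup : is_subgroup (fun a => exists n, wordlen_le S a n).
  split; first by exists 0%N, [::]; rewrite big_nil.
  move=> _ _ [n [w [size_w [w_letters ->]]]] [n' [w' [size_w' [w'_letters ->]]]].
  exists (n + n')%N, (w ++ map -%R w'); split; first by rewrite size_cat size_map leq_add.
  split; last by rewrite big_cat big_map sumrN.
  move=> y; rewrite mem_cat => /orP[/w_letters //|/mapP[y' /w'_letters y'_letter ->]].
  by rewrite opprK; case: y'_letter; [right|left].
apply: zspan_min finite_subgroup _ _; last by apply/in_spanE/genS.2.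
move=> s sS; exists 1%N, [:: s]; rewrite big_seq1; split=> //.
by split=> // y /[1!inE] /eqP ->; left.
Qed.

Lemma wordlen_seq_bounded X : exists n, forall x, x \in X -> wordlen_le S x n.
Proof.
elim: X => [|x X [n le_n]]; first by exists 0%N.
have [m le_m] := wordlen_finite x; exists (maxn n m) => y /[1!inE] /predU1P[->|/le_n le_y].
  by apply: wordlen_leW le_m _; rewrite leq_maxr.
by apply: wordlen_leW le_y _; rewrite leq_maxl.
Qed.

Lemma zspanMn_of_generators (E : seq A) M :
  (forall s, s \in S -> zspan E (s *+ M)) -> forall a, zspan E (a *+ M).
Proof.
move=> SM a; have MnE : is_subgroup (fun a => zspan E (a *+ M)).
  split=> [|x y]; first by rewrite mul0rn; apply: (zspan_subgroup E).1.
  by rewrite mulrnBl; apply: (zspan_subgroup E).2.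
by apply: (zspan_min MnE SM); apply/in_spanE/genS.2.
Qed.

Lemma subgroup_norm_exists H X : generates X H -> exists n, subgroup_norm_is S H n.
Proof.
move=> genX; have [m le_m] := wordlen_seq_bounded X.
have [|n [normH min_n]] := @ex_min_nat (subgroup_norm_le S H); last by exists n.
by exists m, X.
Qed.

End WordLength.

Lemma det_norm_le (R : numDomainType) p (B : 'M[R]_p) (k : R) :
  (forall i j, `|B i j| <= k) -> `|\det B| <= p`!%:R * k ^+ p.
Proof.
move=> le_k; rewrite /determinant (le_trans (ler_norm_sum _ _ _)) //.
rewrite mulr_natl -card_Sn -sumr_const; apply: ler_sum => s _.
rewrite normrM normrX normrN1 expr1n mul1r normr_prod -[p in k ^+ p]card_ord -prodr_const.
by apply: ler_prod => i _; rewrite normr_ge0 le_k.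
Qed.

Lemma mulmx_det_neq0_eq0 (R : idomainType) p (c : 'rV[R]_p) (B : 'M[R]_p) :
  \det B != 0 -> c *m B = 0 -> c = 0.
Proof.
move=> detB_neq0 cB0; apply/eqP.
have := scalemx_eq0 (\det B) c; rewrite (negbTE detB_neq0) /= => <-.
by rewrite -mul_mx_scalar -mul_mx_adj mulmxA cB0 mul0mx.
Qed.

Lemma int_row_free p k (V : 'M[int]_(p, k)) :
  (forall c : 'rV[int]_p, c *m V = 0 -> c = 0) ->
  row_free (map_mx intr V : 'M[rat]_(p, k)).
Proof.
move=> freeV; apply/inj_row_free => u uV0.
pose D := \prod_(i < p) denq (u 0 i).
pose c := \row_i (numq (u 0 i) * \prod_(j < p | j != i) denq (u 0 j)).
have cE : map_mx intr c = D%:~R *: u.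
  apply/rowP => i; rewrite !mxE rmorphM /= numqE rmorph_prod /= /D rmorph_prod /=.
  by rewrite [in RHS](bigD1 i) //= -mulrA mulrC.
have /freeV c0 : c *m V = 0.
  have /matrixP cV0 : map_mx intr (c *m V) = 0 :> 'rV[rat]_k.
    by rewrite map_mxM cE -scalemxAl uV0 scaler0.
  by apply/matrixP => i j; move/eqP: (cV0 i j); rewrite !mxE intr_eq0 => /eqP.
have /eqP := cE; rewrite c0 map_mx0 eq_sym scaler_eq0 intr_eq0 => /orP[|/eqP //].
by rewrite prodf_seq_eq0 => /hasP[i _ /=]; rewrite denq_eq0.
Qed.

Lemma int_free_minor p k (V : 'M[int]_(p, k)) :
  (forall c : 'rV[int]_p, c *m V = 0 -> c = 0) ->
  (p <= k)%N /\ exists f : 'I_p -> 'I_k, \det (colsub f V) != 0.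
Proof.
move=> /int_row_free; set Vq := map_mx _ V => freeVq.
split; first by rewrite -(eqP freeVq) rank_leq_col.
have fullVqT : row_full Vq^T by rewrite /row_full mxrank_tr (eqP freeVq).
exists (fullrankfun fullVqT); have := fullrowsub_unit fullVqT.
have -> : rowsub (fullrankfun fullVqT) Vq^T
    = (map_mx intr (colsub (fullrankfun fullVqT) V))^T.
  by apply/matrixP => i j; rewrite !mxE.
by rewrite unitmxE det_tr det_map_mx unitfE intr_eq0.
Qed.

Lemma diag_lattice_reps p (d : 'I_p -> int) : (forall i, d i != 0) ->
  exists2 R : seq 'rV[int]_p, (size R <= \prod_(i < p) `|d i|)%N &
    forall u, exists2 rho, rho \in R & exists c, u = rho + c *m diag_mx (\row_i d i).
Proof.
move=> d_neq0; pose F := {dffun forall i : 'I_p, 'I_`|d i|}.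
exists [seq \row_i (g i : nat)%:Z | g : F <- enum F].
  rewrite size_map -cardE card_dep_ffun foldrE big_map big_enum /=.
  by under eq_bigr do rewrite card_ord.
move=> u; have lt_mod i : (`|(u 0%R i %% d i)%Z| < `|d i|)%N.
  by rewrite -ltz_nat !abszE ger0_norm ?modz_ge0 ?ltz_mod.
exists (\row_i ((finfun (fun i => Ordinal (lt_mod i)) : F) i : nat)%:Z).
  by apply: map_f; rewrite mem_enum.
exists (\row_i (u 0%R i %/ d i)%Z); apply/rowP => i.
by rewrite mul_mx_diag !mxE ffunE /= gez0_abs ?modz_ge0 // addrC -divz_eq.
Qed.

Lemma int_lattice_reps p (B : 'M[int]_p) : \det B != 0 ->
  exists2 R : seq 'rV[int]_p, (size R <= `|\det B|)%N &
    forall u, exists2 rho, rho \in R & exists c, u = rho + c *m B.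
Proof.
move=> detB_neq0; have [L unitL [U unitU [d _ BE]]] := int_Smith_normal_form B.
have {}BE : B = L *m diag_mx (\row_i d`_i) *m U.
  by rewrite BE; congr (_ *m _ *m _); apply/matrixP => i j; rewrite !mxE.
have detBE : \det B = \det L * (\prod_(i < p) d`_i) * \det U.
  by rewrite BE !det_mulmx det_diag; under eq_bigr do rewrite mxE.
have d_neq0 (i : 'I_p) : d`_i != 0.
  by apply: contraNneq detB_neq0 => di0; rewrite detBE (bigD1 i) //= di0 mul0r mulr0 mul0r.
have [R size_R coverR] := diag_lattice_reps d_neq0.
exists [seq rho *m U | rho <- R].
  have unit_abs (x : int) : x \is a GRing.unit -> `|x|%N = 1%N by case/orP => /eqP ->.
  rewrite !unitmxE in unitL unitU.
  rewrite size_map detBE !abszM (unit_abs _ unitL) (unit_abs _ unitU) mul1n muln1.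
  by rewrite (big_morph (fun x : int => `|x|%N) abszM (erefl : `|1|%N = 1%N)).
move=> u; have [rho rhoR [c uUE]] := coverR (u *m invmx U).
exists (rho *m U); first exact: map_f.
by exists (c *m invmx L); rewrite BE !mulmxA mulmxKV // -mulmxDl -uUE mulmxKV.
Qed.

Section Coordinates.
Variables (A : zmodType) (E : seq A) (M : nat).
Hypotheses (freeE : zfree E) (M_gt0 : (0 < M)%N).
Hypothesis zspanMn : forall a, zspan E (a *+ M).
Implicit Types (H : A -> Prop) (a b t : A) (X Y : seq A).

Lemma coord_ex a :
  exists v : 'rV[int]_(size E), a *+ M == \sum_(i < size E) E`_i *~ v 0 i.
Proof.
have [c ->] := zspanMn a; exists (\row_i c i).
by apply/eqP/eq_bigr => i _; rewrite mxE.
Qed.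

Definition coord a := xchoose (coord_ex a).

Lemma coordP a : a *+ M = \sum_(i < size E) E`_i *~ coord a 0 i.
Proof. exact/eqP/(xchooseP (coord_ex a)). Qed.

Lemma coord_uniq a (v : 'rV[int]_(size E)) :
  a *+ M = \sum_(i < size E) E`_i *~ v 0 i -> coord a = v.
Proof.
move=> aME; apply/rowP => i; apply/eqP; rewrite -subr_eq0; apply/eqP.
have vanish : \sum_(i < size E) E`_i *~ (coord a 0 i - v 0 i) = 0.
  by rewrite (eq_bigr _ (fun i _ => mulrzBr _ _ _)) sumrB -coordP -aME subrr.
exact: freeE vanish i.
Qed.

Lemma coord_is_zmod_morphism : zmod_morphism coord.
Proof.
move=> a b; apply: coord_uniq; rewrite mulrnBl !coordP -sumrB.
by apply: eq_bigr => i _; rewrite !mxE mulrzBr.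
Qed.

HB.instance Definition _ := GRing.isZmodMorphism.Build A _ coord coord_is_zmod_morphism.

Lemma coord_eq0 a : coord a = 0 -> a *+ M = 0.
Proof. by move=> a0; rewrite coordP a0 big1 // => i _; rewrite mxE mulr0z. Qed.

Lemma coord_torsion t : torsion t -> coord t = 0.
Proof.
case=> m [m_gt0 tm0]; have /eqP := congr1 coord tm0.
rewrite raddfMn raddf0 -scaler_nat scalemx_eq0 pnatr_eq0.
by rewrite (negbTE (lt0n_neq0 m_gt0)) => /eqP.
Qed.

Lemma coord_comb_basis (c : 'rV[int]_(size E)) :
  coord (\sum_(i < size E) E`_i *~ c 0 i) = c *+ M.
Proof.
apply: coord_uniq; rewrite -sumrMnl; apply: eq_bigr => i _.
by rewrite mulmxnE -mulr_natr mulrzA mulrz_nat.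
Qed.

Definition coord_mx Y := \matrix_(i < size Y, j < size E) coord Y`_i 0 j.

Lemma coord_comb Y (c : 'rV[int]_(size Y)) :
  coord (\sum_(i < size Y) Y`_i *~ c 0 i) = c *m coord_mx Y.
Proof.
apply/rowP => j; rewrite raddf_sum summxE !mxE.
by apply: eq_bigr => i _; rewrite raddfMz -scaler_int !mxE intz mulrC.
Qed.

Lemma zfree_coord_mx Y :
  zfree Y -> forall c : 'rV[int]_(size Y), c *m coord_mx Y = 0 -> c = 0.
Proof.
move=> freeY c; rewrite -coord_comb => /coord_eq0 /(zfreeMn freeY M_gt0) c0.
by apply/rowP => i; rewrite c0 mxE.
Qed.

Lemma zfree_size_le Y : zfree Y -> (size Y <= size E)%N.
Proof. by move=> /zfree_coord_mx /int_free_minor[]. Qed.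

Lemma torsion_finite (R0 : seq A) :
  (forall a, exists2 r, r \in R0 & zspan E (a - r)) ->
  exists T : seq A, forall t, torsion t -> t \in T.
Proof.
(* A torsion element t = r + \sum_i c_i E_i has coord t = 0, hence
   coord r = - M c: t is determined by r. *)
move=> coverR0; exists [seq r - \sum_(i < size E) E`_i *~ (coord r 0%R i %/ M)%Z | r <- R0].
move=> t tors_t; have [r rR0 [c trE]] := coverR0 t.
have crE i : (coord r 0%R i %/ M)%Z = - c i.
  have trE' : t - r = \sum_(i < size E) E`_i *~ (\row_j c j) 0 i.
    by rewrite trE; apply: eq_bigr => j _; rewrite mxE.
  move/(congr1 coord)/rowP/(_ i): trE'.
  rewrite raddfB /= (coord_torsion tors_t) sub0r coord_comb_basis.
  rewrite mulmxnE !mxE => /eqP; rewrite eqr_oppLR => /eqP ->.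
  by rewrite -mulNrn pmulrn mulrzz mulzK // eqz_nat -lt0n.
apply/mapP; exists r => //; under eq_bigr do rewrite crE mulrNz.
by rewrite sumrN opprK -trE addrC subrK.
Qed.

Section IsolatorCover.
Variables (Y : seq A) (f : 'I_(size Y) -> 'I_(size E)) (T : seq A).
Local Notation B := (colsub f (coord_mx Y)).
Hypotheses (detB_neq0 : \det B != 0) (torsionT : forall t, torsion t -> t \in T).

Lemma colsub_coord_comb (c : 'rV[int]_(size Y)) :
  colsub f (coord (\sum_(i < size Y) Y`_i *~ c 0 i)) = c *m B.
Proof. by rewrite coord_comb mulmx_colsub. Qed.

Lemma isolator_colsub_coord0_torsion b :
  isolator (zspan Y) b -> colsub f (coord b) = 0 -> torsion b.
Proof.
move=> [m [m_gt0 [e bmE]]] fb0; exists m; split=> //.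
have e0 : \row_i e i = 0.
  apply: (mulmx_det_neq0_eq0 detB_neq0); rewrite -colsub_coord_comb.
  under eq_bigr do rewrite mxE.
  by rewrite -bmE raddfMn /= raddfMn /= fb0 mul0rn.
rewrite bmE big1 // => i _.
by move/rowP/(_ i): e0; rewrite !mxE => ->; rewrite mulr0z.
Qed.

(* Up to torsion, [colsub f \o coord] embeds [isolator <Y> / <Y>] into the
   quotient of Z^|Y| by the row lattice of B. *)
Lemma isolator_cover : exists R : seq A, (size R <= `|\det B| * size T)%N /\
  forall a, isolator (zspan Y) a -> exists2 x, x \in R & zspan Y (a - x).
Proof.
have [Rv size_Rv coverRv] := int_lattice_reps detB_neq0.
pose P rho x := isolator (zspan Y) x /\ exists c, colsub f (coord x) = rho + c *m B.
have [l [size_l [_ l_complete]]] := finite_choice P Rv.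
exists [seq x + t | x <- l, t <- T]; split.
  by rewrite size_allpairs leq_mul2r (leq_trans size_l) ?orbT.
move=> a iso_a; have [rho rhoRv [c faE]] := coverRv (colsub f (coord a)).
have [|x xl [iso_x [c' fxE]]] := l_complete rho rhoRv.
  by exists a; split=> //; exists c.
pose s := \sum_(i < size Y) Y`_i *~ (c - c') 0 i.
have isoY := isolator_subgroup (zspan_subgroup Y).
have tors : torsion (a - x - s).
  apply: isolator_colsub_coord0_torsion.
    apply: isoY.2; first exact: isoY.2.
    by apply/sub_isolator; exists (fun i => (c - c') 0 i).
  rewrite !raddfB /= faE fxE colsub_coord_comb mulmxBl.
  by rewrite opprD addrACA subrr add0r subrr.
exists (x + (a - x - s)); first exact: allpairs_f (torsionT tors).
by rewrite opprD addrA subKr; exists (fun i => (c - c') 0 i).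
Qed.

End IsolatorCover.

Variable S : seq A.
Hypothesis genS : generates S (fun _ => True).

Lemma zspan_reps : exists R0 : seq A, forall a, exists2 r, r \in R0 & zspan E (a - r).
Proof.
pose F := {ffun 'I_(size S) -> 'I_M}.
exists [seq \sum_(j < size S) S`_j *~ (g j : nat)%:Z | g : F <- enum F].
move=> a; have [c ->] : zspan S a by apply/in_spanE/genS.2.
have M_neq0 : M%:Z != 0 by rewrite eqz_nat -lt0n.
have lt_mod j : (`|(c j %% M)%Z| < M)%N.
  by rewrite -ltz_nat gez0_abs ?modz_ge0 ?ltz_pmod.
set g : F := [ffun j => Ordinal (lt_mod j)].
exists (\sum_(j < size S) S`_j *~ g j); first by apply: map_f; rewrite mem_enum.
suff -> : \sum_(j < size S) S`_j *~ c j - \sum_(j < size S) S`_j *~ g j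
    = (\sum_(j < size S) S`_j *~ (c j %/ M)%Z) *+ M by apply: zspanMn.
rewrite -sumrB -sumrMnl; apply: eq_bigr => j _.
rewrite ffunE /= gez0_abs ?modz_ge0 // -mulrzBr pmulrn -mulrzA.
by rewrite {1}(divz_eq (c j) M) addrK.
Qed.

(* Shifted by one so that its powers are nondecreasing in the exponent. *)
Definition coord_bound := (\max_(s <- S) \max_(j < size E) `|coord s 0%R j|).+1.

Lemma coord_letter_le y j : (y \in S) \/ (- y \in S) -> `|coord y 0 j| <= coord_bound%:R.
Proof.
have le_bound s : s \in S -> `|coord s 0 j| <= coord_bound%:R.
  move=> sS; rewrite -abszE natz lez_nat ltnW // ltnS.
  by apply: leq_trans (leq_bigmax_seq _ sS isT); apply: leq_bigmax.
by case=> [/le_bound //|/le_bound]; rewrite raddfN /= mxE normrN.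
Qed.

Lemma coord_wordlen_le a n :
  wordlen_le S a n -> forall j, `|coord a 0 j| <= (n * coord_bound)%:R.
Proof.
move=> [w [size_w [w_letters ->]]] j; rewrite raddf_sum /= summxE.
apply: le_trans (ler_norm_sum _ _ _) _.
apply: le_trans (_ : \sum_(y <- w) (coord_bound%:R : int) <= _).
  by rewrite !big_seq; apply: ler_sum => y /w_letters /coord_letter_le.
rewrite big_const_seq count_predT iter_addr addr0 -mulrnA ler_nat mulnC.
by rewrite leq_mul2r size_w orbT.
Qed.

Variable T : seq A.
Hypothesis torsionT : forall t, torsion t -> t \in T.

Lemma rankZ_exists H : is_subgroup H ->
  exists Y, [/\ forall y, y \in Y -> H y, zfree Y & rankZ_is H (size Y)].
Proof.
move=> hH; pose P r := exists Y, [/\ size Y = r, forall y, y \in Y -> H y & Zindep Y].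
have [||r [[Y [<- HY /ZindepE freeY]] max_r]] := @ex_max_nat P (size E).
- by exists 0%N, [::]; split=> //; apply/ZindepE/zfree_nil.
- by move=> r [Y [<- _ /ZindepE /zfree_size_le]].
exists Y; split=> //; split; first by exists Y; split=> //; split=> //; apply/ZindepE.
by move=> Z HZ indepZ; apply: max_r; exists Z.
Qed.

Lemma subgroup_generated H : is_subgroup H -> exists X, generates X H.
Proof.
move=> hH; have [Y [HY freeY rankH]] := rankZ_exists hH.
have [_ [f detB_neq0]] := int_free_minor (zfree_coord_mx freeY).
have [R [_ coverR]] := isolator_cover detB_neq0 torsionT.
apply: (generates_of_cover hH HY) => h Hh.
exact/coverR/(rankZ_isolator hH HY freeY rankH).
Qed.

Lemma det_le_generators H X n : is_subgroup H -> generates X H ->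
  (forall x, x \in X -> wordlen_le S x n) ->
  exists d Y, [/\ det_is H d, zfree Y, forall y, y \in Y -> H y &
    (d <= (size E)`! * (n * coord_bound) ^ size Y * size T)%N].
Proof.
move=> hH [XH genH] le_n.
have [Y [sYX [freeY isoX]]] := zfree_subseq_isolator X.
have HY y : y \in Y -> H y by move=> /sYX; apply: XH.
have isoHY a : isolator H a -> isolator (zspan Y) a.
  move=> isoHa; apply: isolator_idem; apply: isolatorS isoHa => h /genH /in_spanE.
  by apply: zspan_min; [apply/isolator_subgroup/zspan_subgroup|].
have [le_YE [f detB_neq0]] := int_free_minor (zfree_coord_mx freeY).
have [R [size_R coverR]] := isolator_cover detB_neq0 torsionT.
have [|d le_d detH] :=
  index_le_cover (c := R) hH (isolator_subgroup hH) (@sub_isolator _ H).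
  move=> a /isoHY /coverR[x xR Yax]; exists x => //; exact: zspan_min hH HY Yax.
exists d, Y; split=> //; apply: leq_trans le_d (leq_trans size_R _).
have le_entries i j : `|colsub f (coord_mx Y) i j| <= (n * coord_bound)%:R.
  by rewrite !mxE; apply/coord_wordlen_le/le_n/sYX/mem_nth.
have := det_norm_le le_entries; rewrite -natrX -natrM -abszE natz lez_nat => le_det.
by rewrite leq_mul2r (leq_trans le_det) ?orbT // leq_mul2r leq_fact ?le_YE ?orbT.
Qed.

Lemma rank0_of_norm0 H Y : is_subgroup H -> subgroup_norm_le S H 0 ->
  (forall y, y \in Y -> H y) -> zfree Y -> Y = [::].
Proof.
move=> hH [X [[_ genH] le_0]].
case: Y => // y Y HY /zfree_neq0/(_ (mem_head y Y)) /eqP[].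
have /genH/in_spanE := HY y (mem_head y Y).
apply: (@zspan_min _ (fun a => a = 0)) => [|x /le_0 /wordlen_le0 //].
exact: trivial_subgroup.
Qed.

Lemma det_le_norm_rank H : is_subgroup H -> exists d n r,
  [/\ det_is H d, subgroup_norm_is S H n, rankZ_is H r &
      (d <= (size E)`! * coord_bound ^ size E * size T * n ^ r)%N].
Proof.
move=> hH; have [Y0 [HY0 freeY0 rankH]] := rankZ_exists hH.
have [X genX] := subgroup_generated hH.
have [n normH] := subgroup_norm_exists genS genX.
have [[X1 [genX1 le_n]] _] := normH.
have [d [Y [detH freeY HY le_d]]] := det_le_generators hH genX1 le_n.
exists d, n, (size Y0); split=> //; apply: leq_trans le_d _.
have le_YY0 : (size Y <= size Y0)%N by apply: rankH.2 => //; apply/ZindepE.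
have le_pow : (n ^ size Y <= n ^ size Y0)%N.
  case: n normH {le_n} => [[norm0 _]|n _]; last by rewrite leq_pexp2l.
  by move: le_YY0; rewrite (rank0_of_norm0 hH norm0 HY0 freeY0) leqn0 => /eqP ->.
have le_bound : (coord_bound ^ size Y <= coord_bound ^ size E)%N.
  by rewrite leq_pexp2l ?zfree_size_le.
rewrite expnMn.
apply: (@leq_trans ((size E)`! * (n ^ size Y0 * coord_bound ^ size E) * size T)).
  by rewrite leq_mul2r leq_mul2l leq_mul ?orbT.
by rewrite [(n ^ _ * _)%N]mulnC !mulnA mulnAC.
Qed.

End Coordinates.

Theorem mainTheorem9 (A : zmodType) (S : seq A)
    (hS : generates S (fun _ : A => True)) :
  exists C : rat, 0 < C /\
    forall H : A -> Prop, is_subgroup H ->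
      exists d n r : nat,
        det_is H d /\ subgroup_norm_is S H n /\ rankZ_is H r /\
        (d%:R <= C * (n%:R) ^+ r).
Proof.
have [E [_ [freeE isoS]]] := zfree_subseq_isolator S.
have [M M_gt0 SM] := isolator_uniform (zspan_subgroup E) isoS.
have zspanMn := zspanMn_of_generators hS SM.
have [R0 coverR0] := zspan_reps M_gt0 zspanMn hS.
have [T torsionT] := torsion_finite freeE M_gt0 zspanMn coverR0.
have T_gt0 : (0 < size T)%N by case: T torsionT => // /(_ 0 (sub_isolator erefl)).
exists ((size E)`! * coord_bound zspanMn S ^ size E * size T)%:R.
split; first by rewrite ltr0n !muln_gt0 fact_gt0 expn_gt0 T_gt0.
move=> H hH.
have [d [n [r [detH normH rankH le_d]]]] :=
  det_le_norm_rank freeE M_gt0 zspanMn hS torsionT hH.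
by exists d, n, r; rewrite -natrX -natrM ler_nat.
Qed.
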